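(* Let $H(s)=\sum_{a=1}^M H_a(s)$, $0\le s\le1$, be a differentiable family of stoquastic frustration-free Hamiltonians on $\mathcal{Q}^n$ with $J=\max_s\|dH(s)/ds\|$. Let $T$ be a positive integer and $H^{(j)}=H(j/T)$ for $j=0,\ldots,T$. Assume each $H^{(j)}$ has a unique ground-state $|\psi^{(j)}\rangle$, with $H^{(j)}|\psi^{(j)}\rangle=0$, chosen to be a non-negative state, and let $\Delta$ be the smallest, over $j=0,\ldots,T$, of the spectral gap of $H^{(j)}$ (the difference between its smallest and second smallest eigenvalues). Then for every $j=0,\ldots,T-1$, $$\langle\psi^{(j+1)}|\psi^{(j)}\rangle\ge 1-\frac{J^2}{T^2\Delta^2}.$$
   Context: $\mathcal{Q}^n=(\mathbb{C}^2)^{\otimes n}$ with standard basis $\{|x\rangle\}$. A local Hamiltonian $H=\sum_a H_a$ (each term acting on $O(1)$ qubits) is stoquastic if each term has real non-positive off-diagonal entries in the standard basis, and frustration-free if each term is positive semidefinite and the ground-state of $H$ is a zero eigenvector of every term. A non-negative state is a normalized vector with real non-negative amplitudes in the standard basis. *)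

From HB Require Import structures.
From mathcomp Require Import all_boot all_order all_algebra.
From mathcomp Require Import all_classical all_reals all_analysis.
Set Implicit Arguments. Unset Strict Implicit. Unset Printing Implicit Defensive.
Import Order.TTheory GRing.Theory Num.Theory.
Import numFieldNormedType.Exports.
Local Open Scope ring_scope.
Local Open Scope classical_set_scope.

Section QDefs.
Variable R : realType.
Variable N : nat.

(* Operators on Q^n are represented by real N x N matrices (N = 2^n) in the
   standard basis; stoquastic Hermitian operators have real entries. *)
Definition hermitian (A : 'M[R]_N) : Prop := A^T = A.

Definition stoquastic (A : 'M[R]_N) : Prop :=
  hermitian A /\ forall i j : 'I_N, i != j -> A i j <= 0.

Definition qform (A : 'M[R]_N) (v : 'cV[R]_N) : R := (v^T *m A *m v) 0 0.

Definition psd (A : 'M[R]_N) : Prop :=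
  hermitian A /\ forall v : 'cV[R]_N, 0 <= qform A v.

Definition vnorm (v : 'cV[R]_N) : R := Num.sqrt (\sum_i v i 0 ^+ 2).

Definition opnorm (A : 'M[R]_N) : R :=
  sup [set vnorm (A *m v) | v in [set v : 'cV[R]_N | vnorm v = 1]].

Definition inner (u v : 'cV[R]_N) : R := (u^T *m v) 0 0.

Definition nonneg_state (v : 'cV[R]_N) : Prop :=
  (forall i, 0 <= v i 0) /\ vnorm v = 1.

Definition is_min_eig (A : 'M[R]_N) (l0 : R) : Prop :=
  eigenvalue A l0 /\ forall l, eigenvalue A l -> l0 <= l.

(* second smallest eigenvalue, counted with multiplicity *)
Definition is_second_eig (A : 'M[R]_N) (l0 l1 : R) : Prop :=
  if (2 <= \rank (eigenspace A l0))%N then l1 = l0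
  else [/\ eigenvalue A l1, l0 < l1 &
         forall l, eigenvalue A l -> l0 < l -> l1 <= l].

Definition is_spectral_gap (A : 'M[R]_N) (d : R) : Prop :=
  exists l0 l1, [/\ is_min_eig A l0, is_second_eig A l0 l1 & d = l1 - l0].

End QDefs.

Definition Htot (R : realType) (N M : nat) (H : 'I_M -> R -> 'M[R]_N) (s : R)
  : 'M[R]_N := \sum_(a < M) H a s.

Definition dHtot (R : realType) (N M : nat) (H : 'I_M -> R -> 'M[R]_N) (s : R)
  : 'M[R]_N := \matrix_(i, k) derive1 (fun t => Htot H t i k) s.

Definition frustration_free (R : realType) (N M : nat) (Hs : 'I_M -> 'M[R]_N)
  : Prop :=
  (forall a, psd (Hs a)) /\
  exists v : 'cV[R]_N, v != 0 /\ forall a, Hs a *m v = 0.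

Definition cont_on_01 (R : realType) (f : R -> R) : Prop :=
  {within `[0%R, 1%R]%classic, continuous f}.

(* Let A := H((j+1)/T) and c := <psi_(j+1), psi_j>, which is >= 0 as both states
   are non-negative.  Since A psi_(j+1) = 0 = H(j/T) psi_j, the mean value theorem gives
   |A psi_j| = |(H((j+1)/T) - H(j/T)) psi_j| <= J/T.  The vector w := psi_j - c psi_(j+1)
   is orthogonal to the kernel of A, which is spanned by psi_(j+1), so the spectral
   theorem (for the complexification of the symmetric matrix A) gives
   Delta |w| <= |A w| = |A psi_j|.  As |w|^2 = 1 - c^2, this yields
   1 - c^2 <= J^2 / (T^2 Delta^2), and c >= c^2 because 0 <= c <= 1. *)

From Pilot Require Import Defs.
From HB Require Import structures.
From mathcomp Require Import all_boot all_order all_algebra.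
From mathcomp Require Import all_classical all_reals all_analysis.
From mathcomp Require Import complex ring lra.
Import Order.TTheory GRing.Theory Num.Theory.
Import numFieldNormedType.Exports.
Local Open Scope ring_scope.
Local Open Scope classical_set_scope.
Set Implicit Arguments. Unset Strict Implicit. Unset Printing Implicit Defensive.

Section EuclideanInner.
Variables (R : realType) (N : nat).
Implicit Types u v w : 'cV[R]_N.

Lemma innerE u v : inner u v = \sum_i u i 0 * v i 0.
Proof. by rewrite /inner mxE; apply: eq_bigr => i _; rewrite mxE. Qed.

Lemma innerC u v : inner u v = inner v u.
Proof. by rewrite !innerE; apply: eq_bigr => i _; rewrite mulrC. Qed.

Lemma innerBr u v w : inner u (v - w) = inner u v - inner u w.
Proof. by rewrite /inner mulmxBr !mxE. Qed.

Lemma innerZr u v (a : R) : inner u (a *: v) = a * inner u v.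
Proof. by rewrite /inner -scalemxAr mxE. Qed.

Lemma innerBl u v w : inner (v - w) u = inner v u - inner w u.
Proof. by rewrite innerC innerBr !(innerC u). Qed.

Lemma innerZl u v (a : R) : inner (a *: v) u = a * inner v u.
Proof. by rewrite innerC innerZr innerC. Qed.

Lemma inner_ge0 v : 0 <= inner v v.
Proof. by rewrite innerE sumr_ge0 // => i _; rewrite -expr2 sqr_ge0. Qed.

Lemma inner_eq0 v : (inner v v == 0) = (v == 0).
Proof.
apply/idP/eqP => [|->]; last by rewrite /inner mulmx0 mxE.
rewrite innerE psumr_eq0 => [/allP v0|i _]; last by rewrite -expr2 sqr_ge0.
apply/matrixP => i j; rewrite (ord1 j) mxE.
by apply/eqP; have := v0 i (mem_index_enum _); rewrite /= mulf_eq0 orbb.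
Qed.

Lemma vnorm_ge0 v : 0 <= vnorm v.
Proof. exact: sqrtr_ge0. Qed.

Lemma vnorm_sqr v : vnorm v ^+ 2 = inner v v.
Proof.
rewrite /vnorm sqr_sqrtr ?sumr_ge0 // => [|i _]; last exact: sqr_ge0.
by rewrite innerE; apply: eq_bigr => i _; rewrite expr2.
Qed.

Lemma vnorm1_neq0 v : vnorm v = 1 -> v != 0.
Proof. by move=> v1; rewrite -inner_eq0 -vnorm_sqr v1 expr1n oner_eq0. Qed.

Lemma inner_sqr_le u v : inner u v ^+ 2 <= inner u u * inner v v.
Proof.
have [->|v_neq0] := eqVneq v 0; first by rewrite /inner !mulmx0 mxE expr0n mulr0.
have vv_gt0 : 0 < inner v v by rewrite lt0r inner_eq0 v_neq0 inner_ge0.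
have : 0 <= inner v v * (inner u u * inner v v - inner u v ^+ 2).
  rewrite (_ : _ * _ = inner (inner v v *: u - inner u v *: v)
                            (inner v v *: u - inner u v *: v)) ?inner_ge0 //.
  by rewrite innerBl !innerBr !innerZl !innerZr (innerC v u); ring.
by rewrite pmulr_rge0 // subr_ge0.
Qed.

Lemma inner_le_vnorm u v : inner u v <= vnorm u * vnorm v.
Proof.
have := inner_sqr_le u v; rewrite -!vnorm_sqr -exprMn.
have := mulr_ge0 (vnorm_ge0 u) (vnorm_ge0 v).
move: (vnorm u * vnorm v) (inner u v) => p x; nra.
Qed.

Lemma abs_coord_le_vnorm v i : `|v i 0| <= vnorm v.
Proof.
rewrite -sqrtr_sqr /vnorm ler_sqrt ?sumr_ge0 // => [|j _]; last exact: sqr_ge0.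
by rewrite (bigD1 i) //= lerDl sumr_ge0 // => j _; rewrite sqr_ge0.
Qed.

Lemma vnorm_le_l1 v : vnorm v <= \sum_i `|v i 0|.
Proof.
have l1_ge0 : 0 <= \sum_i `|v i 0| by rewrite sumr_ge0.
rewrite /vnorm -(ger0_norm l1_ge0) -sqrtr_sqr ler_sqrt ?sqr_ge0 //.
rewrite expr2 mulr_sumr; apply: ler_sum => i _.
rewrite -real_normK ?num_real // expr2 mulrC ler_wpM2r //.
by rewrite (bigD1 i) //= lerDl sumr_ge0.
Qed.

Lemma nonneg_inner_ge0 (u v : 'cV[R]_N) :
  (forall i, 0 <= u i 0) -> (forall i, 0 <= v i 0) -> 0 <= inner u v.
Proof. by move=> u_ge0 v_ge0; rewrite innerE sumr_ge0 // => i _; rewrite mulr_ge0. Qed.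
End EuclideanInner.

Section OperatorNorm.
Variables (R : realType) (N : nat).

Lemma vnorm_mulmx_le_opnorm (A : 'M[R]_N) v : vnorm v = 1 -> vnorm (A *m v) <= opnorm A.
Proof.
move=> v1; apply: ub_le_sup; last by exists v.
exists (\sum_i \sum_k `|A i k|) => y [w /= w1 <-].
apply: le_trans (vnorm_le_l1 _) _; apply: ler_sum => i _.
rewrite mxE; apply: le_trans (ler_norm_sum _ _ _) _; apply: ler_sum => k _.
by rewrite normrM ler_piMr // -w1 abs_coord_le_vnorm.
Qed.

Lemma continuous_within_sum (A : set R) n (f : 'I_n -> R -> R) :
  (forall i, {within A, continuous f i}) -> {within A, continuous \sum_i f i}.
Proof.
move=> fc; apply: (big_ind (fun g => {within A, continuous g})) => //.
- by move=> x; apply: cst_continuous.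
- by move=> g h gc hc x; exact: continuousD (gc x) (hc x).
Qed.

(* With [u := (Hs b - Hs a) psi], the real MVT for [t |-> <u, Hs t psi>] gives
   [|u|^2 <= |u| J (b - a)]. *)
Lemma vnorm_increment_le (Hs dH : R -> 'M[R]_N) (J a b : R) (psi : 'cV[R]_N) :
  a < b ->
  (forall i k, {within `[a, b], continuous (fun s => Hs s i k)}) ->
  (forall s, a < s < b -> forall i k, is_derive s 1 (fun t => Hs t i k) (dH s i k)) ->
  (forall s, a < s < b -> opnorm (dH s) <= J) ->
  vnorm psi = 1 ->
  vnorm ((Hs b - Hs a) *m psi) <= J * (b - a).
Proof.
move=> ab Hs_cont Hs_der dH_le psi1.
set u := (Hs b - Hs a) *m psi.
have inner_mulmx (A : 'M[R]_N) : inner u (A *m psi) = \sum_i \sum_k (u i 0 * psi k 0) * A i k.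
  rewrite innerE; apply: eq_bigr => i _; rewrite [(A *m psi) i 0]mxE mulr_sumr.
  by apply: eq_bigr => k _; rewrite mulrAC mulrA.
pose F := \sum_i \sum_k (u i 0 * psi k 0) \*: (fun t => Hs t i k).
have FE t : F t = inner u (Hs t *m psi).
  by rewrite inner_mulmx /F !fct_sumE; apply: eq_bigr => i _; rewrite fct_sumE.
have F_der t : t \in `]a, b[%R -> is_derive t 1 F (inner u (dH t *m psi)).
  rewrite in_itv /= inner_mulmx => t_ab.
  apply: is_derive_sum => i; apply: is_derive_sum => k.
  by apply: is_deriveZ; apply: Hs_der.
have F_cont : {within `[a, b], continuous F}.
  apply: continuous_within_sum => i; apply: continuous_within_sum => k x.
  exact: (@continuousZr _ _ _ _ (u i 0 * psi k 0) _ (Hs_cont i k x)).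
have [c c_ab F_mvt] := MVT ab F_der F_cont.
have {c_ab} c_ab : a < c < b by move: c_ab; rewrite in_itv.
have dF_le : inner u (dH c *m psi) <= vnorm u * J.
  apply: le_trans (inner_le_vnorm _ _) _; rewrite ler_wpM2l ?vnorm_ge0 //.
  exact: le_trans (vnorm_mulmx_le_opnorm _ psi1) (dH_le c c_ab).
have J_ge0 : 0 <= J.
  exact: le_trans (vnorm_ge0 _) (le_trans (vnorm_mulmx_le_opnorm (dH c) psi1) (dH_le c c_ab)).
have : vnorm u ^+ 2 <= vnorm u * J * (b - a).
  by rewrite vnorm_sqr {2}/u mulmxBl innerBr -!FE F_mvt ler_wpM2r // subr_ge0 ltW.
have : 0 <= J * (b - a) by rewrite mulr_ge0 // subr_ge0 ltW.
rewrite -mulrA; move: (J * (b - a)) (vnorm u) (vnorm_ge0 u) => e x; nra.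
Qed.

Lemma derive_increment_le (Hs : R -> 'M[R]_N) (J a b : R) (psi : 'cV[R]_N) :
  (forall i k, cont_on_01 (fun s => Hs s i k)) ->
  (forall s, 0 < s < 1 -> forall i k, derivable (fun t => Hs t i k) s 1) ->
  (forall s, 0 < s < 1 -> opnorm (\matrix_(i, k) derive1 (fun t => Hs t i k) s) <= J) ->
  0 <= a -> a < b -> b <= 1 -> vnorm psi = 1 ->
  vnorm ((Hs b - Hs a) *m psi) <= J * (b - a).
Proof.
move=> Hs_cont Hs_der dHs_le a_ge0 ab b_le1.
have sub01 s : a < s < b -> 0 < s < 1.
  by case/andP => a_s s_b; rewrite (le_lt_trans a_ge0 a_s) (lt_le_trans s_b b_le1).
pose dHs s := \matrix_(i, k) derive1 (fun t => Hs t i k) s.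
apply: (vnorm_increment_le (dH := dHs)) ab _ _ _ => [i k|s /sub01 s01 i k|s /sub01 /dHs_le //].
  apply: continuous_subspaceW (Hs_cont i k) => x /=; rewrite !in_itv /=.
  by case/andP => ax xb; rewrite (le_trans a_ge0 ax) (le_trans xb b_le1).
by rewrite mxE derive1E; apply: derivableP (Hs_der s s01 i k).
Qed.
End OperatorNorm.

Lemma kermx_sub_span (R : realType) (N : nat) (A : 'M[R]_N) (phi : 'cV[R]_N) :
  A^T = A -> (forall v, A *m v = 0 -> exists c : R, v = c *: phi) ->
  (kermx A <= phi^T)%MS.
Proof.
move=> A_sym A_ker; apply/row_subP => r.
have /sub_kermxP rA0 := row_sub r (kermx A).
have [c rc] : exists c, (row r (kermx A))^T = c *: phi.
  by apply: A_ker; rewrite -[A in A *m _]A_sym -trmx_mul rA0 trmx0.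
by rewrite -[row r _]trmxK rc linearZ scalemx_sub.
Qed.

Section Complexification.
Local Open Scope complex_scope.
Local Open Scope sesquilinear_scope.
Variables (R : realType) (N : nat).
Local Notation C := R[i].
Local Notation cx := (map_mx (real_complex R)).

Lemma real_complex_real (x : R) : x%:C \is Num.real.
Proof. by apply/complex_realP; exists x. Qed.

Lemma conj_real_complex (x : R) : Num.conj x%:C = x%:C.
Proof. exact/conj_Creal/real_complex_real. Qed.

Lemma cx_dotmx (u v : 'cV[R]_N) : ((cx u)^t* *m cx v) 0 0 = (inner u v)%:C.
Proof.
rewrite mxE innerE rmorph_sum; apply: eq_bigr => k _.
by rewrite !mxE conj_real_complex rmorphM.
Qed.

Lemma dotmx_sum_sqr (x : 'cV[C]_N) : (x^t* *m x) 0 0 = \sum_k `|x k 0| ^+ 2.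
Proof. by rewrite mxE; apply: eq_bigr => k _; rewrite !mxE normCKC. Qed.

Lemma unitary_dotmx (P : 'M[C]_N) (x : 'cV[C]_N) : P \is unitarymx ->
  (P^t* *m x)^t* *m (P^t* *m x) = x^t* *m x.
Proof.
by move=> /unitarymxP PP; rewrite trmx_mul map_mxM trmxCK mulmxA -(mulmxA _ P) PP mulmx1.
Qed.

Lemma eigenvalue_cx (A : 'M[R]_N) l : eigenvalue (cx A) l%:C = eigenvalue A l.
Proof. by rewrite !eigenvalue_root_char -map_char_poly fmorph_root. Qed.

Section EigenRow.
Variables (A : 'M[R]_N) (phi w : 'cV[R]_N) (g : R).
Hypotheses (A_ker : (kermx A <= phi^T)%MS) (g_ge0 : 0 <= g).
Hypothesis eig_ge : forall l, eigenvalue A l -> l != 0 -> g <= `|l|.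
Hypothesis w_perp : inner phi w = 0.

(* For [d = 0] both sides vanish: [p] lies in the complexified kernel, hence is a
   multiple of [phi^T], which is orthogonal to [w]. *)
Lemma eigenrow_gap (p : 'rV[C]_N) d : d \is Num.real -> p != 0 ->
  p *m cx A = d *: p ->
  (g ^+ 2)%:C * `|(p *m cx w) 0 0| ^+ 2 <= `|d * (p *m cx w) 0 0| ^+ 2.
Proof.
move=> d_real p_neq0 pA; have [d0|d_neq0] := eqVneq d 0.
  have : (p <= cx phi^T)%MS.
    apply: submx_trans (_ : (p <= kermx (cx A))%MS) _.
      by apply/sub_kermxP; rewrite pA d0 scale0r.
    by rewrite -map_kermx map_submx.
  move=> /sub_rVP [a ->]; rewrite -scalemxAl mxE -map_mxM mxE -/(inner phi w).
  by rewrite w_perp mulr0 normr0 expr0n mulr0.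
rewrite normrM exprMn ler_wpM2r ?exprn_ge0 //.
have [l dl] : exists l, d = l%:C by apply/complex_realP.
have l_neq0 : l != 0 by apply: contraNneq d_neq0 => l0; rewrite dl l0.
have /eig_ge /(_ l_neq0) g_le : eigenvalue A l.
  by rewrite -eigenvalue_cx -dl; apply/eigenvalueP; exists p.
rewrite real_normK // dl -(rmorphXn (real_complex R) 2 l) lecR -[l ^+ 2]real_normK ?num_real //.
by apply: lerXn2r; rewrite ?nnegrE ?normr_ge0.
Qed.
End EigenRow.

Lemma gap_sqr_inner_le (A : 'M[R]_N) (phi w : 'cV[R]_N) (g : R) :
  A^T = A -> (kermx A <= phi^T)%MS -> 0 <= g ->
  (forall l, eigenvalue A l -> l != 0 -> g <= `|l|) ->
  inner phi w = 0 ->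
  g ^+ 2 * inner w w <= inner (A *m w) (A *m w).
Proof.
move=> A_sym A_ker g_ge0 eig_ge w_perp; set Ac := cx A.
have Ac_herm : Ac \is hermsymmx.
  apply: realsym_hermsym; last by apply/mxOverP => i j; rewrite mxE real_complex_real.
  by apply/is_hermitianmxP; rewrite expr0 scale1r map_mx_id // /Ac map_trmx A_sym.
set P := spectralmx Ac; set d := spectral_diag Ac.
have P_unitary : P \is unitarymx := spectral_unitarymx Ac.
have PPt : P *m P^t* = 1%:M by apply/unitarymxP.
have PtP : P^t* *m P = 1%:M by rewrite -[P^t*]mul1mx mulmxKtV.
have AcE : Ac = P^t* *m diag_mx d *m P.
  by rewrite -invmx_unitary //; apply/orthomx_spectralP/hermitian_normalmx.
set y := P *m cx w.
have wE : cx w = P^t* *m y by rewrite mulmxA PtP mul1mx.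
have AwE : Ac *m cx w = P^t* *m (diag_mx d *m y) by rewrite AcE -!mulmxA.
rewrite -lecR rmorphM /= -!cx_dotmx map_mxM -/Ac AwE {1 2}wE !unitary_dotmx //.
rewrite !dotmx_sum_sqr mulr_sumr; apply: ler_sum => i _.
have -> : (diag_mx d *m y) i 0 = d 0 i * y i 0 by rewrite mul_diag_mx mxE.
have -> : y i 0 = (row i P *m cx w) 0 0 by rewrite !mxE; apply: eq_bigr => k _; rewrite !mxE.
apply: (eigenrow_gap A_ker g_ge0 eig_ge w_perp); first exact/mxOverP/hermitian_spectral_diag_real.
  apply/eqP => P_i0; have /rowP/(_ i) := congr1 (row i) PPt.
  by rewrite row_mul P_i0 mul0mx !mxE eqxx => /eqP; rewrite eq_sym oner_eq0.
have PAc : P *m Ac = diag_mx d *m P by rewrite AcE !mulmxA PPt mul1mx.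
by rewrite -row_mul PAc; apply/rowP => j; rewrite mul_diag_mx !mxE.
Qed.
End Complexification.

Section SpectralGap.
Variables (R : realType) (N : nat).

Lemma psd_sum M (Hs : 'I_M -> 'M[R]_N) : (forall a, psd (Hs a)) -> psd (\sum_a Hs a).
Proof.
move=> Hs_psd; split.
  by rewrite /Defs.hermitian linear_sum; apply: eq_bigr => a _; case: (Hs_psd a).
move=> v; rewrite /qform mulmx_sumr mulmx_suml summxE.
by apply: sumr_ge0 => a _; case: (Hs_psd a) => _; apply.
Qed.

Lemma psd_eigenvalue_ge0 (A : 'M[R]_N) l : psd A -> eigenvalue A l -> 0 <= l.
Proof.
move=> [_ A_ge0] /eigenvalueP [v vA v_neq0].
have vv_gt0 : 0 < inner v^T v^T by rewrite lt0r inner_ge0 inner_eq0 trmx_eq0 v_neq0.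
have := A_ge0 v^T; rewrite /qform trmxK vA -scalemxAl mxE.
by move=> lvv_ge0; rewrite -(pmulr_lge0 _ vv_gt0) /inner trmxK.
Qed.

Lemma spectral_gap_le_eigenvalue (A : 'M[R]_N) (phi : 'cV[R]_N) d :
  psd A -> phi != 0 -> A *m phi = 0 -> (kermx A <= phi^T)%MS ->
  is_spectral_gap A d ->
  0 < d /\ (forall l, eigenvalue A l -> l != 0 -> d <= l).
Proof.
move=> A_psd phi_neq0 A_phi A_ker [l0 [l1 [[el0 l0_min] l1_second ->]]].
have A_sym : A^T = A by case: A_psd.
have e0 : eigenvalue A 0.
  apply/eigenvalueP; exists phi^T; last by rewrite trmx_eq0.
  by rewrite -{1}A_sym -trmx_mul A_phi trmx0 scale0r.
have l0_eq0 : l0 = 0 by apply/le_anti; rewrite l0_min // (psd_eigenvalue_ge0 A_psd el0).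
subst l0.
move: l1_second; rewrite /is_second_eig; case: ifPn => [rank_ge2 _|_ [_ l1_gt0 l1_min]].
  suff : (\rank (eigenspace A 0) <= 1)%N by rewrite leqNgt rank_ge2.
  apply: leq_trans (rank_leq_row phi^T); apply: mxrankS.
  by rewrite /eigenspace raddf0 subr0.
rewrite subr0; split => // l el l_neq0; apply: l1_min => //.
by rewrite lt_neqAle eq_sym l_neq0 (psd_eigenvalue_ge0 A_psd el).
Qed.

Lemma overlap_ge (A : 'M[R]_N) (phi psi : 'cV[R]_N) (g e : R) :
  A^T = A -> A *m phi = 0 -> (kermx A <= phi^T)%MS ->
  0 < g -> (forall l, eigenvalue A l -> l != 0 -> g <= `|l|) ->
  vnorm phi = 1 -> vnorm psi = 1 -> 0 <= inner phi psi ->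
  vnorm (A *m psi) <= e ->
  1 - e ^+ 2 / g ^+ 2 <= inner phi psi.
Proof.
move=> A_sym A_phi A_ker g_gt0 eig_ge phi1 psi1 c_ge0 Apsi_le.
set c := inner phi psi; set w := psi - c *: phi.
have phiphi : inner phi phi = 1 by rewrite -vnorm_sqr phi1 expr1n.
have w_perp : inner phi w = 0 by rewrite innerBr innerZr phiphi mulr1 subrr.
have ww : inner w w = 1 - c ^+ 2.
  rewrite innerBl !innerBr !innerZl !innerZr -vnorm_sqr psi1 phiphi (innerC psi).
  by rewrite -/c expr1n expr2 mulr1 subrr subr0.
have Aw : A *m w = A *m psi by rewrite mulmxBr -scalemxAr A_phi scaler0 subr0.
have := gap_sqr_inner_le A_sym A_ker (ltW g_gt0) eig_ge w_perp.
rewrite ww Aw -vnorm_sqr => gap_le.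
have Apsi_sqr_le : vnorm (A *m psi) ^+ 2 <= e ^+ 2.
  by rewrite lerXn2r ?nnegrE ?vnorm_ge0 // (le_trans (vnorm_ge0 _) Apsi_le).
have c_le1 : c <= 1 by have := inner_ge0 w; rewrite ww; nra.
have : 1 - c ^+ 2 <= e ^+ 2 / g ^+ 2.
  by rewrite ler_pdivlMr ?exprn_gt0 // mulrC (le_trans gap_le Apsi_sqr_le).
have : c ^+ 2 <= c by rewrite expr2 ler_piMr.
by move: (e ^+ 2 / g ^+ 2) => E; lra.
Qed.
End SpectralGap.

Lemma grid_point_01 (R : realType) (T k : nat) :
  (0 < T)%N -> (k <= T)%N -> (0 : R) <= (k%:R / T%:R : R) <= 1.
Proof. by move=> T_gt0 kT; rewrite divr_ge0 // ler_pdivrMr ?ltr0n // mul1r ler_nat. Qed.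

Unset Implicit Arguments.

Theorem lemma5p1 (R : realType) (n M T : nat)
  (H : 'I_M -> R -> 'M[R]_(2 ^ n)) (J Delta : R)
  (psi : nat -> 'cV[R]_(2 ^ n)) :
  (forall s : R, 0 <= s <= 1 -> forall a, stoquastic (H a s)) ->
  (forall s : R, 0 <= s <= 1 -> frustration_free (fun a => H a s)) ->
  (forall i k, cont_on_01 (fun s : R => Htot H s i k)) ->
  (forall s : R, 0 < s < 1 -> forall i k,
      derivable (fun t => Htot H t i k) s 1) ->
  (forall s : R, 0 < s < 1 -> opnorm (dHtot H s) <= J) ->
  (0 < T)%N ->
  (forall j, (j <= T)%N ->
     [/\ nonneg_state (psi j),
         Htot H (j%:R / T%:R) *m psi j = 0 &
         forall v : 'cV[R]_(2 ^ n), Htot H (j%:R / T%:R) *m v = 0 ->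
           exists c : R, v = c *: psi j]) ->
  (exists gap : nat -> R,
     [/\ forall j, (j <= T)%N -> is_spectral_gap (Htot H (j%:R / T%:R)) (gap j),
         forall j, (j <= T)%N -> Delta <= gap j &
         exists2 j, (j <= T)%N & Delta = gap j]) ->
  forall j, (j < T)%N ->
    1 - J ^+ 2 / (T%:R ^+ 2 * Delta ^+ 2) <= inner (psi j.+1) (psi j).
Proof.
(* Stoquasticity only serves to make the ground states non-negative, which is assumed here. *)
move=> _ H_ff H_cont H_der dH_le T_gt0 psi_ground [gap [gapE Delta_le [j0 j0T Delta_eq]]] j jT.
pose s k := k%:R / T%:R : R.
have H_psd k : (k <= T)%N -> psd (Htot H (s k)).
  by move=> kT; apply: psd_sum; case: (H_ff _ (grid_point_01 R T_gt0 kT)).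
have gap_le_eig k : (k <= T)%N -> 0 < gap k /\
    (forall l, eigenvalue (Htot H (s k)) l -> l != 0 -> gap k <= l).
  move=> kT; have [[_ psi1] psi_ker psi_uniq] := psi_ground k kT.
  apply: spectral_gap_le_eigenvalue (H_psd k kT) (vnorm1_neq0 psi1) psi_ker _ (gapE k kT).
  by apply: kermx_sub_span psi_uniq; case: (H_psd k kT).
have [[psi_ge0 psi1] psi_ker _] := psi_ground j (ltnW jT).
have [[phi_ge0 phi1] phi_ker phi_uniq] := psi_ground j.+1 jT.
have /andP[s_ge0 _] := grid_point_01 R T_gt0 (ltnW jT).
have /andP[_ s_le1] := grid_point_01 R T_gt0 jT.
have ss : s j < s j.+1 by rewrite ltr_pM2r ?invr_gt0 ?ltr0n // ltr_nat.
have ds : s j.+1 - s j = T%:R^-1 by rewrite -mulrBl -natrB // subSnn mul1r.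
have step : vnorm (Htot H (s j.+1) *m psi j) <= J * (s j.+1 - s j).
  rewrite -[Htot H _ *m _]subr0 -psi_ker -mulmxBl.
  exact: derive_increment_le H_cont H_der dH_le s_ge0 ss s_le1 psi1.
rewrite ds in step.
have A_sym : (Htot H (s j.+1))^T = Htot H (s j.+1) by case: (H_psd j.+1 jT).
have Delta_gt0 : 0 < Delta by rewrite Delta_eq; case: (gap_le_eig j0 j0T).
have -> : J ^+ 2 / (T%:R ^+ 2 * Delta ^+ 2) = (J * T%:R^-1) ^+ 2 / Delta ^+ 2.
  by rewrite exprMn exprVn invfM mulrA.
apply: overlap_ge A_sym phi_ker (kermx_sub_span A_sym phi_uniq) Delta_gt0 _ phi1 psi1 _ step.
  move=> l el l_neq0; apply: le_trans (Delta_le _ jT) (le_trans _ (ler_norm l)).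
  by case: (gap_le_eig j.+1 jT) => _; apply.
exact: nonneg_inner_ge0.
Qed.
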